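(* There exists no structure $\mathbf{E}=(\{0,1\},\mathcal R)$ (a structure with universe $\{0,1\}$ in some countable first-order language) such that $(\mathbf{S}_0,\mathbf{E})$ is a dual pair.
   Context: $\mathbf{S}_0=(\{0,1\},\beta)$ where $\beta$ is the ternary relation with $\beta(x,y,z)$ iff ($x=z=1\implies y=1$). A structure is $\mathbf{D}$-separated if it embeds (injective homomorphism preserving and reflecting all relations) into a power of $\mathbf{D}$. Semi-dual pair: for finite models $\mathbf{D}$, $\mathbf{E}$ of countable languages $\mathcal L,\mathcal R$ with the same universe, $(\mathbf{D},\mathbf{E})$ is a semi-dual pair if for every finite $\mathbf{D}$-separated $\mathbf{X}$ with universe $X$: (S1) the set $\hom(\mathbf{X},\mathbf{D})$ of homomorphisms is a substructure of $\mathbf{E}^X$; (S2) for every homomorphism $\phi$ from $\hom(\mathbf{X},\mathbf{D})$ (with the $\mathcal R$-structure induced from $\mathbf{E}^X$) into $\mathbf{E}$ there is $x\in X$ with $\phi(f)=f(x)$ for all $f\in\hom(\mathbf{X},\mathbf{D})$. $(\mathbf{D},\mathbf{E})$ is a dual pair if both $(\mathbf{D},\mathbf{E})$ and $(\mathbf{E},\mathbf{D})$ are semi-dual pairs. *)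

From mathcomp Require Import all_boot.
Set Implicit Arguments. Unset Strict Implicit. Unset Printing Implicit Defensive.

(* A countable first-order language: countably many relation symbols and
   function symbols (constants = 0-ary function symbols), with arities. *)
Record language := Language {
  rsym : countType;
  fsym : countType;
  rar : rsym -> nat;
  far : fsym -> nat }.

Record structure (L : language) (A : Type) := Structure {
  rel : forall i : rsym L, ('I_(rar i) -> A) -> Prop;
  op  : forall j : fsym L, ('I_(far j) -> A) -> A }.

Section Defs.
Variable L : language.

Definition is_hom (A B : Type) (SA : structure L A) (SB : structure L B)
  (h : A -> B) : Prop :=
  (forall i (t : 'I_(rar i) -> A), rel SA t -> rel SB (h \o t)) /\
  (forall j (t : 'I_(far j) -> A), h (op SA t) = op SB (h \o t)).

Definition is_embedding (A B : Type) (SA : structure L A) (SB : structure L B)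
  (h : A -> B) : Prop :=
  injective h /\ is_hom SA SB h /\
  (forall i (t : 'I_(rar i) -> A), rel SB (h \o t) -> rel SA t).

Definition power (A : Type) (SA : structure L A) (K : Type) : structure L (K -> A) :=
  @Structure L (K -> A)
    (fun i t => forall k, rel SA (fun n => t n k))
    (fun j t => fun k => op SA (fun n => t n k)).

Definition separated (A X : Type) (D : structure L A) (SX : structure L X) : Prop :=
  exists (K : Type) (h : X -> (K -> A)), is_embedding SX (power D K) h.

End Defs.

Definition semi_dual_pair (L R : language) (A : Type)
  (D : structure L A) (E : structure R A) : Prop :=
  forall (X : finType) (SX : structure L X), 0 < #|X| -> separated D SX ->
  (* (S1) hom(X,D) is closed under the operations of E^X (hence a substructure) *)
  (forall j (t : 'I_(far j) -> (X -> A)),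
     (forall n, is_hom SX D (t n)) -> is_hom SX D (op (power E X) t)) /\
  (* (S2) every homomorphism hom(X,D) -> E is an evaluation *)
  (forall phi : {f : X -> A | is_hom SX D f} -> A,
     ((forall i (t : 'I_(rar i) -> {f : X -> A | is_hom SX D f}),
         rel (power E X) (fun n => sval (t n)) -> rel E (phi \o t)) /\
      (forall j (t : 'I_(far j) -> {f : X -> A | is_hom SX D f})
              (g : {f : X -> A | is_hom SX D f}),
         sval g = op (power E X) (fun n => sval (t n)) ->
         phi g = op E (phi \o t))) ->
     exists x : X, forall f : {f : X -> A | is_hom SX D f}, phi f = sval f x).

Definition dual_pair (L R : language) (A : Type)
  (D : structure L A) (E : structure R A) : Prop :=
  semi_dual_pair D E /\ semi_dual_pair E D.

Definition L0 : language :=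
  @Language (unit : countType) (void : countType) (fun _ => 3) (fun v => match v with end).

Definition beta (t : 'I_3 -> bool) : Prop :=
  t ord0 && t (inord 2) -> t (inord 1).

Definition S0 : structure L0 bool :=
  @Structure L0 bool (fun _ t => beta t) (fun v => match v with end).

(* By (S1) the operations of E
   preserve beta, and by (S2), applied to structures all of whose maps into
   S0 are homomorphisms, every homomorphism E^X -> E is an evaluation.
   Index E^4 by [option 'I_3], with [None] as the fourth coordinate.  The
   tuples whose fourth coordinate copies another one are the union of three
   images of E^3, so a homomorphism from a subpower Y of E^4 containing them
   agrees with one projection on all of them.  Take for Y the copy tuples if
   they are closed, and otherwise the Horn tuples (y0 y1 y2 -> y3): these are
   closed since the operations preserve beta, and their only extra element
   0001 is then an operation of copy tuples.  Either way every homomorphism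
   Y -> E is a projection, and "is not the projection onto [None]" is a
   homomorphism hom(Y, E) -> S0; by (S2) for (E, S0) it is the evaluation at
   some y in Y, forcing y = 1110, which is not a Horn tuple. *)

From Pilot Require Import Defs.
From mathcomp Require Import all_boot.
From Stdlib Require Import FunctionalExtensionality Classical.
Set Implicit Arguments. Unset Strict Implicit. Unset Printing Implicit Defensive.

Lemma ffunE_fun (I : Type) (K : finType) (A : Type) (F : I -> K -> A) (k : K) :
  (fun i => [ffun k' => F i k'] k) = (fun i => F i k).
Proof. by apply: functional_extensionality => i; rewrite ffunE. Qed.

Lemma homs_eq_op (L : language) (A B : Type) (SA : structure L A) (SB : structure L B)
    (g g' : A -> B) :
  is_hom SA SB g -> is_hom SA SB g' -> forall j (t : 'I_(far j) -> A),
  (forall n, g (t n) = g' (t n)) -> g (Defs.op SA t) = g' (Defs.op SA t).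
Proof.
move=> [_ gop] [_ g'op] j t e; rewrite gop g'op; congr (Defs.op SB).
exact: functional_extensionality.
Qed.

Lemma is_hom_comp (L : language) (A B C : Type) (SA : structure L A)
    (SB : structure L B) (SC : structure L C) (h : A -> B) (h' : B -> C) :
  is_hom SA SB h -> is_hom SB SC h' -> is_hom SA SC (h' \o h).
Proof.
move=> [hrel hop] [hrel' hop']; split=> [i t /hrel /hrel' //|j t /=].
by rewrite hop hop'.
Qed.

Section FinitePower.
Variables (L : language) (A : Type) (D : structure L A).

Definition fpower (K : finType) : structure L {ffun K -> A} :=
  @Structure L {ffun K -> A}
    (fun i t => forall k, Defs.rel D (fun n => t n k))
    (fun j t => [ffun k => Defs.op D (fun n => t n k)]).

Lemma fpower_eval_hom (K : finType) (k : K) : is_hom (fpower K) D (fun f => f k).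
Proof. by split=> [i t|j t] => [/(_ k)|] //=; rewrite ffunE. Qed.

Lemma fpower_precomp_hom (K K' : finType) (s : K' -> K) :
  is_hom (fpower K) (fpower K') (fun f => [ffun k => f (s k)]).
Proof.
split=> [i t Ht k|j t]; first by rewrite /= ffunE_fun.
by apply/ffunP => k; rewrite /= !ffunE ffunE_fun.
Qed.

Definition fpower_closed (K : finType) (P : pred {ffun K -> A}) : Prop :=
  forall j (t : 'I_(far j) -> {ffun K -> A}), (forall n, P (t n)) ->
    P (Defs.op (fpower K) t).

Definition subfpower (K : finType) (P : pred {ffun K -> A}) (clP : fpower_closed P) :
    structure L {y | P y} :=
  @Structure L {y | P y}
    (fun i t => Defs.rel (fpower K) (fun n => val (t n)))
    (fun j t => exist (fun y => P y) _ (clP j (fun n => val (t n)) (fun n => valP (t n)))).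

Lemma is_hom_subfpower (B : Type) (SB : structure L B) (K : finType)
    (P : pred {ffun K -> A}) (clP : fpower_closed P) (h : B -> {y | P y}) :
  is_hom SB (fpower K) (val \o h) -> is_hom SB (subfpower clP) h.
Proof.
move=> [hrel hop]; split=> // j t; apply: val_inj.
by rewrite /= -[val _]/((val \o h) _) hop.
Qed.

Lemma subfpower_eval_hom (K : finType) (P : pred {ffun K -> A})
    (clP : fpower_closed P) (k : K) :
  is_hom (subfpower clP) D (fun y => val y k).
Proof. by split=> [i t /(_ k)|j t] //=; rewrite ffunE. Qed.

Lemma fpower_embedding_separated (X : Type) (SX : structure L X) (K : finType)
    (h : X -> {ffun K -> A}) :
  is_embedding SX (fpower K) h -> separated D SX.
Proof.
move=> [h_inj [[hrel hop] hrefl]]; exists K, (fun x k => h x k).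
split=> [x y /(congr1 finfun)|]; first by rewrite !ffunK => /h_inj.
split; [split=> // j t|by []].
by rewrite hop; apply: functional_extensionality => k; rewrite ffunE.
Qed.

Lemma fpower_separated (K : finType) : separated D (fpower K).
Proof. by apply: (@fpower_embedding_separated _ _ K id); split=> //; split. Qed.

Lemma subfpower_separated (K : finType) (P : pred {ffun K -> A})
    (clP : fpower_closed P) : separated D (subfpower clP).
Proof.
by apply: (@fpower_embedding_separated _ _ K val); split; [exact: val_inj|split].
Qed.

End FinitePower.

Section SemiDualPair.
Variables (L R : language) (A : finType) (D : structure L A) (E : structure R A).
Hypothesis dDE : semi_dual_pair D E.

(* [a0] only witnesses that the test structure [D^(far j)] is nonempty. *)
Lemma semi_dual_pair_polymorphism (a0 : A) j i (t : 'I_(rar i) -> 'I_(far j) -> A) :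
  (forall m, Defs.rel D (fun k => t k m)) -> Defs.rel D (fun k => Defs.op E (t k)).
Proof.
move=> Ht; have X_gt0 : 0 < #|{ffun 'I_(far j) -> A}| by apply/card_gt0P; exists [ffun=> a0].
have [S1 _] := dDE X_gt0 (fpower_separated D _).
have [op_rel _] := S1 j _ (fun n => fpower_eval_hom D n).
have -> : (fun k => Defs.op E (t k)) =
    (fun x : {ffun _ -> A} => Defs.op E x) \o (fun k => [ffun n => t k n]).
  apply: functional_extensionality => k /=; congr (Defs.op E).
  by apply: functional_extensionality => n; rewrite ffunE.
by apply: op_rel => m /=; rewrite ffunE_fun.
Qed.

Lemma semi_dual_pair_fpower_eval (X : finType) (SX : structure L X) :
    0 < #|X| -> separated D SX -> (forall f : X -> A, is_hom SX D f) ->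
  forall g, is_hom (fpower E X) E g -> exists x, forall f, g f = f x.
Proof.
move=> X_gt0 sepX all_hom g [grel gop].
have [_ /(_ (fun f => g (finfun (sval f))))[|x gx]] := dDE X_gt0 sepX.
  split=> [i t Ht|j t f ->]; first by apply: grel => x /=; rewrite ffunE_fun.
  by rewrite -gop; congr g; apply/ffunP => x; rewrite /= !ffunE ffunE_fun.
by exists x => f; rewrite -{1}[f]ffunK (gx (exist _ _ (all_hom f))).
Qed.
End SemiDualPair.

Definition degenerate (X : Type) : structure L0 X :=
  @Structure L0 X (fun _ t => t (inord 1) = t ord0 \/ t (inord 1) = t (inord 2))
    (fun v => match v with end).

Lemma degenerate_hom (X : Type) (f : X -> bool) : is_hom (degenerate X) S0 f.
Proof. by split=> [i t [] e|[]]; rewrite /= /beta /comp e => /andP[]. Qed.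

Lemma degenerate_separated (X : eqType) : separated S0 (degenerate X).
Proof.
exists (X -> bool), (fun x f => f x); split; [|split; [split=> [i t Ht f|[]]|]].
- by move=> x y /(congr1 (fun h => h (fun z => z == x))) /=; rewrite eqxx => /esym/eqP.
- exact: (degenerate_hom f).1.
move=> i t /(_ (fun x => (x == t ord0) || (x == t (inord 2)))).
by rewrite /= /beta /= !eqxx orbT => /(_ isT) /orP[] /eqP; [left|right].
Qed.


Definition mid3 : 'I_3 := @Ordinal 3 1 isT.

Lemma ord3P (m : 'I_3) : [\/ m = ord0, m = mid3 | m = ord_max].
Proof.
by case: m => [[|[|[|//]]] ?]; [constructor 1|constructor 2|constructor 3]; apply: val_inj.
Qed.

Lemma forall_ord3 (P : pred 'I_3) : [forall m, P m] = [&& P ord0, P mid3 & P ord_max].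
Proof. by apply/forallP/and3P => [H|[? ? ?] m]; [split|case: (ord3P m) => ->]. Qed.

Lemma ord3_const_or_id (b : 'I_3 -> 'I_3) :
    (forall m m' k, k != m -> k != m' -> (b m == k) = (b m' == k)) ->
  (exists k, forall m, b m = k) \/ (forall m, b m = m).
Proof.
move=> Hb.
suff: (b ord0 == b mid3) && (b mid3 == b ord_max) ||
      [&& b ord0 == ord0, b mid3 == mid3 & b ord_max == ord_max].
  case/orP=> [/andP[/eqP e01 /eqP e12]|/and3P[/eqP e0 /eqP e1 /eqP e2]].
    by left; exists (b ord0) => m; case: (ord3P m) => ->; rewrite -?e12 -?e01.
  by right=> m; case: (ord3P m) => ->.
move: (Hb mid3 ord_max ord0 isT isT) (Hb ord0 ord_max mid3 isT isT).
move: (Hb ord0 mid3 ord_max isT isT).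
by move: (b ord0) (b mid3) (b ord_max); do 3!case=> [[|[|[|//]]] ?].
Qed.

Definition copy_tuple (y : {ffun option 'I_3 -> bool}) : bool :=
  [exists m, y (Some m) == y None].

Definition horn_tuple (y : {ffun option 'I_3 -> bool}) : bool :=
  [forall m, y (Some m)] ==> y None.

Definition dup (m : 'I_3) (f : {ffun 'I_3 -> bool}) : {ffun option 'I_3 -> bool} :=
  [ffun k => f (odflt m k)].

Definition pair_tuple (a c : 'I_3) : {ffun option 'I_3 -> bool} :=
  [ffun k => (k == Some a) || (k == Some c)].

Lemma copy_dup m f : copy_tuple (dup m f).
Proof. by apply/existsP; exists m; rewrite !ffunE. Qed.

Lemma exists_neq2 (T : finType) (a c : T) : 2 < #|T| -> exists m, (m != a) && (m != c).
Proof.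
move=> T_gt2; case: (pickP (fun m => (m != a) && (m != c))) => [m|none]; first by exists m.
suff: #|T| <= 2 by rewrite leqNgt T_gt2.
apply: leq_trans (card_size [:: a; c]); apply/subset_leq_card/subsetP => m _.
by move: (none m); rewrite !inE; case: (m == a) (m == c) => -[].
Qed.

Lemma copy_pair a c : copy_tuple (pair_tuple a c).
Proof.
have [|m /andP[ma mc]] := @exists_neq2 _ a c; first by rewrite card_ord.
by apply/existsP; exists m; rewrite !ffunE /= !(inj_eq Some_inj) (negbTE ma) (negbTE mc).
Qed.

Lemma copy_horn y : copy_tuple y -> horn_tuple y.
Proof. by case/existsP=> m /eqP ym; apply/implyP => /forallP; rewrite -ym. Qed.

Lemma horn_not_copy y :
  horn_tuple y -> ~~ copy_tuple y -> y = [ffun k => k == None].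
Proof.
move=> /implyP hy /existsPn ny.
have yN : y None.
  case yN: (y None) => //; rewrite -yN; apply: hy; apply/forallP => m.
  by move: (ny m); rewrite yN; case: (y (Some m)).
by apply/ffunP=> -[m|]; rewrite ffunE //=; move: (ny m); rewrite yN; case: (y (Some m)).
Qed.

Section S0Dual.
Variables (R : language) (E : structure R bool).
Hypothesis dS0E : semi_dual_pair S0 E.

Lemma S0_polymorphism j (u v w : 'I_(far j) -> bool) :
  (forall m, u m && w m -> v m) -> Defs.op E u && Defs.op E w -> Defs.op E v.
Proof.
move=> uwv; have := @semi_dual_pair_polymorphism _ _ _ S0 E dS0E false j tt
  (fun k => nth u [:: u; v; w] k).
by rewrite /= /beta /= !inordK //=; apply.
Qed.

Lemma S0_fpower_eval (X : finType) (x0 : X) g :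
  is_hom (fpower E X) E g -> exists x, forall f, g f = f x.
Proof.
apply: (semi_dual_pair_fpower_eval dS0E _ (degenerate_separated X) (@degenerate_hom X)).
by apply/card_gt0P; exists x0.
Qed.

Lemma horn_closed : fpower_closed E horn_tuple.
Proof.
move=> j t ht; apply/implyP; rewrite forall_ord3 !ffunE => /and3P[h0 h1 h2].
have h01 := @S0_polymorphism j (fun n => t n (Some ord0))
  (fun n => t n (Some ord0) && t n (Some mid3)) (fun n => t n (Some mid3)) (fun _ => id).
apply: (S0_polymorphism (u := fun n => t n (Some ord0) && t n (Some mid3))
  (w := fun n => t n (Some ord_max))) => [m|]; last by rewrite h2 andbT h01 // h0.
by move: (ht m); rewrite /horn_tuple forall_ord3 andbA => /implyP.
Qed.

Lemma subfpower_hom_eval_on_copy (P : pred {ffun option 'I_3 -> bool})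
    (clP : fpower_closed E P) (copyP : forall y, copy_tuple y -> P y) g :
  is_hom (subfpower clP) E g -> exists k, forall y, copy_tuple (val y) -> g y = val y k.
Proof.
move=> hg; pose gdup m f := g (exist _ (dup m f) (copyP _ (copy_dup m f))).
have /fin_all_exists[b gb] m : exists x, forall f, gdup m f = f x.
  apply: (S0_fpower_eval ord0).
  apply: is_hom_comp hg; apply: is_hom_subfpower; exact: fpower_precomp_hom.
have g_copy y : copy_tuple (val y) ->
    exists2 m, val y (Some m) = val y None & g y = val y (Some (b m)).
  case/existsP=> m /eqP ym; exists m => //.
  have := gb m [ffun i => val y (Some i)]; rewrite ffunE => <-.
  by congr g; apply: val_inj; apply/ffunP=> -[i|]; rewrite !ffunE.
have [|[k bk]|bid] := @ord3_const_or_id b.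
- move=> m m' k km km'; pose f := [ffun x => x == k].
  have : gdup m f = gdup m' f.
    congr g; apply: val_inj; apply/ffunP=> -[x|]; rewrite !ffunE //=.
    by rewrite eq_sym (negbTE km) eq_sym (negbTE km').
  by rewrite !gb !ffunE.
- by exists (Some k) => y /g_copy[m _ ->]; rewrite bk.
- by exists None => y /g_copy[m <- ->]; rewrite bid.
Qed.

Lemma copy_horn_subfpower_not_dual (P : pred {ffun option 'I_3 -> bool})
    (clP : fpower_closed E P) (copyP : forall y, copy_tuple y -> P y)
    (hornP : forall y, P y -> horn_tuple y) :
    (forall g, is_hom (subfpower clP) E g -> exists k, forall y, g y = val y k) ->
  ~ semi_dual_pair E S0.
Proof.
move=> hom_eval dES0.
pose pair a c : {y | P y} := exist _ (pair_tuple a c) (copyP _ (copy_pair a c)).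
have [|_ S2] := dES0 _ (subfpower clP) _ (subfpower_separated clP).
  by apply/card_gt0P; exists (pair ord0 ord0).
pose phi (g : {g | is_hom (subfpower clP) E g}) := ~~ [forall y, sval g y == val y None].
have phi_eval (g : {g | is_hom (subfpower clP) E g}) k :
    (forall y, sval g y = val y k) -> phi g = (k != None).
  case: k => [a|] gk; apply/negP; last by apply; apply/forallP => y; rewrite gk.
  by move/forallP/(_ (pair a a)); rewrite gk !ffunE eqxx.
have [|y phi_y] := S2 phi.
  split=> [i t Ht|[]]; rewrite /= /beta /comp.
  have [k0 k0E] := hom_eval _ (svalP (t ord0)).
  have [k1 k1E] := hom_eval _ (svalP (t (inord 1))).
  have [k2 k2E] := hom_eval _ (svalP (t (inord 2))).
  rewrite (phi_eval _ _ k0E) (phi_eval _ _ k1E) (phi_eval _ _ k2E).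
  case: k0 k0E => [a|] k0E //; case: k2 k2E => [c|] k2E //; case: k1 k1E => [//|k1E _].
  by move: (Ht (pair a c)); rewrite /= /beta /= k0E k1E k2E !ffunE !eqxx orbT => /(_ isT).
have phi_y_eval k : val y k = (k != None).
  by have := phi_y (exist _ _ (subfpower_eval_hom clP k)); rewrite (phi_eval _ k).
move: (hornP _ (valP y)); rewrite /horn_tuple phi_y_eval /= => /negP; apply.
by apply/forallP => m; rewrite phi_y_eval.
Qed.

Lemma copy_subfpower_hom_eval (clW : fpower_closed E copy_tuple) g :
  is_hom (subfpower clW) E g -> exists k, forall y, g y = val y k.
Proof.
move=> /(subfpower_hom_eval_on_copy (fun y => id))[k gk].
by exists k => y; apply: gk (valP y).
Qed.

Lemma horn_subfpower_hom_eval (not_closed : ~ fpower_closed E copy_tuple) g :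
  is_hom (subfpower horn_closed) E g -> exists k, forall y, g y = val y k.
Proof.
move=> hg.
have [j [t [tW op_not_copy]]] : exists j (t : 'I_(far j) -> {ffun option 'I_3 -> bool}),
    (forall n, copy_tuple (t n)) /\ ~~ copy_tuple (Defs.op (fpower E _) t).
  apply: NNPP => none; apply: not_closed => j t tW.
  have [//|op_not_copy] := boolP (copy_tuple (Defs.op (fpower E _) t)).
  by case: none; exists j, t.
have [k gk] := subfpower_hom_eval_on_copy copy_horn hg; exists k => y.
have [/gk //|y_not_copy] := boolP (copy_tuple (val y)).
pose th n : {y | horn_tuple y} := exist _ (t n) (copy_horn (tW n)).
have -> : y = Defs.op (subfpower horn_closed) th.
  apply: val_inj; rewrite /= (horn_not_copy (valP y) y_not_copy); symmetry.
  exact: horn_not_copy (horn_closed (fun n => copy_horn (tW n))) op_not_copy.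
exact: homs_eq_op hg (subfpower_eval_hom horn_closed k) _ _ (fun n => gk (th n) (tW n)).
Qed.
End S0Dual.

Theorem mainTheorem17 :
  forall (R : language) (E : structure R bool), ~ dual_pair S0 E.
Proof.
move=> R E [dS0E dES0].
have [clW|not_closed] := classic (fpower_closed E copy_tuple).
  apply: (copy_horn_subfpower_not_dual (clP := clW) (fun y => id) copy_horn _ dES0).
  exact: copy_subfpower_hom_eval.
apply: (copy_horn_subfpower_not_dual (clP := horn_closed dS0E) copy_horn (fun y => id) _ dES0).
exact: horn_subfpower_hom_eval.
Qed.
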